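(* Let $n\ge3$ and let $\{e_{\alpha_i},f_{\alpha_i}\mid 1\leq i\leq n\}$ be Chevalley generators of the simple Lie algebra $\mathfrak{g}$ of type $D_n$, where the simple roots are labeled so that $\alpha_1,\alpha_2,\dots,\alpha_{n-1}$ form the chain $1-2-\cdots-(n-1)$ and $\alpha_n$ is joined (by a single bond) only to $\alpha_2$. Put $$E=[f_{\alpha_{n-1}},[\cdots,[f_{\alpha_2},f_{\alpha_n}]\cdots]],\qquad F=[[\cdots[e_{\alpha_n},e_{\alpha_2}],\cdots],e_{\alpha_{n-1}}].$$ Then there is a Lie algebra homomorphism $\mathrm{gim}(M_n)\to\mathfrak{g}$ with $e_i\mapsto e_{\alpha_i}$, $f_i\mapsto f_{\alpha_i}$ for $1\le i\le n-1$, and $e_n\mapsto E$, $f_n\mapsto F$.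
   Context: For $n\geq 3$, $M_n=(m_{i,j})$ is the $n\times n$ integer matrix with $m_{i,i}=2$, $m_{i,i+1}=m_{i+1,i}=-1$ ($1\le i\le n-1$), $m_{1,n}=m_{n,1}=1$, all other entries $0$. $\mathrm{gim}(M_n)$ is the complex Lie algebra generated by $e_i,f_i,h_i$ ($1\le i\le n$) with relations: (R1) $[h_i,e_j]=m_{i,j}e_j$, $[h_i,f_j]=-m_{i,j}f_j$, $[e_i,f_i]=h_i$ for all $i,j$; (R2) for $i\ne j$ with $m_{i,j}\le0$: $[e_i,f_j]=0=[f_i,e_j]$, $(\mathrm{ad}\,e_i)^{1-m_{i,j}}e_j=0=(\mathrm{ad}\,f_i)^{1-m_{i,j}}f_j$; (R3) for $i\ne j$ with $m_{i,j}>0$: $[e_i,e_j]=0=[f_i,f_j]$, $(\mathrm{ad}\,e_i)^{m_{i,j}+1}f_j=0=(\mathrm{ad}\,f_i)^{m_{i,j}+1}e_j$. *)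

From HB Require Import structures.
From mathcomp Require Import all_boot all_order all_algebra.
From mathcomp Require Import complex.
From mathcomp Require Import Rstruct.
Set Implicit Arguments. Unset Strict Implicit. Unset Printing Implicit Defensive.
Import Order.TTheory GRing.Theory Num.Theory.
Local Open Scope ring_scope.

Definition C : fieldType := complex Rdefinitions.R.

Definition is_lie (L : lmodType C) (br : L -> L -> L) : Prop :=
  [/\ (forall (a : C) (x y z : L), br (a *: x + y) z = a *: br x z + br y z),
      (forall (a : C) (x y z : L), br z (a *: x + y) = a *: br z x + br z y),
      (forall x : L, br x x = 0) &
      (forall x y z : L, br x (br y z) + br y (br z x) + br z (br x y) = 0)].

Definition lie_hom (L1 L2 : lmodType C) (br1 : L1 -> L1 -> L1)
  (br2 : L2 -> L2 -> L2) (phi : L1 -> L2) : Prop :=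
  (forall (a : C) (x y : L1), phi (a *: x + y) = a *: phi x + phi y) /\
  (forall x y : L1, phi (br1 x y) = br2 (phi x) (phi y)).

Definition adpow (L : Type) (br : L -> L -> L) (k : nat) (x y : L) : L :=
  iter k (br x) y.

(* The matrix M_n, 0-indexed: indices 0..n-1 stand for 1..n. *)
Definition Mn (n : nat) (i j : 'I_n) : int :=
  if i == j then 2%:Z
  else if ((i == 0%N :> nat) && (j == n.-1 :> nat)) ||
          ((j == 0%N :> nat) && (i == n.-1 :> nat)) then 1%:Z
  else if (i.+1 == j :> nat) || (j.+1 == i :> nat) then (- 1%:Z)
  else 0%:Z.

Definition gim_rels (n : nat) (L : lmodType C) (br : L -> L -> L)
  (e f h : 'I_n -> L) : Prop :=
  (forall i j, br (h i) (e j) = (Mn i j)%:~R *: e j) /\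
  (forall i j, br (h i) (f j) = - ((Mn i j)%:~R *: f j)) /\
  (forall i, br (e i) (f i) = h i) /\
  (forall i j, i != j -> (Mn i j <= 0)%R ->
     [/\ br (e i) (f j) = 0, br (f i) (e j) = 0,
         adpow br (absz (1 - Mn i j)) (e i) (e j) = 0 &
         adpow br (absz (1 - Mn i j)) (f i) (f j) = 0]) /\
  (forall i j, i != j -> (0 < Mn i j)%R ->
     [/\ br (e i) (e j) = 0, br (f i) (f j) = 0,
         adpow br (absz (Mn i j + 1)) (e i) (f j) = 0 &
         adpow br (absz (Mn i j + 1)) (f i) (e j) = 0]).

(* (G, brG, eG, fG, hG) is gim(M_n): the Lie algebra presented by generators
   e_i, f_i, h_i and relations (R1)-(R3), characterised by its universal
   property. *)
Definition is_gim (n : nat) (G : lmodType C) (brG : G -> G -> G)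
  (eG fG hG : 'I_n -> G) : Prop :=
  is_lie brG /\ gim_rels brG eG fG hG /\
  forall (L : lmodType C) (br : L -> L -> L) (e f h : 'I_n -> L),
    is_lie br -> gim_rels br e f h ->
    exists phi : G -> L,
      [/\ lie_hom brG br phi,
          (forall i, phi (eG i) = e i), (forall i, phi (fG i) = f i),
          (forall i, phi (hG i) = h i) &
          (forall psi : G -> L, lie_hom brG br psi ->
             (forall i, psi (eG i) = e i) -> (forall i, psi (fG i) = f i) ->
             (forall i, psi (hG i) = h i) -> forall x, psi x = phi x)].

(* Cartan matrix of type D_n, 0-indexed, with the labeling of the paper:
   nodes 0 - 1 - ... - (n-2) form a chain, node n-1 is joined only to node 1. *)
Definition cartanD (n : nat) (i j : 'I_n) : int :=
  if i == j then 2%:Z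
  else if [&& (i < n.-1)%N, (j < n.-1)%N & (i.+1 == j :> nat) || (j.+1 == i :> nat)]
    then (- 1%:Z)
  else if ((i == 1%N :> nat) && (j == n.-1 :> nat)) ||
          ((j == 1%N :> nat) && (i == n.-1 :> nat)) then (- 1%:Z)
  else 0%:Z.

Definition lie_generates (L : lmodType C) (br : L -> L -> L) (S : L -> Prop) : Prop :=
  forall P : L -> Prop,
    (forall x, S x -> P x) -> P 0 ->
    (forall (a : C) x y, P x -> P y -> P (a *: x + y)) ->
    (forall x y, P x -> P y -> P (br x y)) ->
    forall x, P x.

(* (g, br, e, f) is the simple Lie algebra of type D_n with Chevalley
   generators e_i = e_{alpha_i}, f_i = f_{alpha_i}: by Serre's theorem this is
   exactly a nonzero Lie algebra generated by e_i, f_i satisfying the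
   Chevalley--Serre relations for the Cartan matrix of D_n (h_i = [e_i, f_i]). *)
Definition chevalley_Dn (n : nat) (g : lmodType C) (br : g -> g -> g)
  (e f : 'I_n -> g) : Prop :=
  let h i := br (e i) (f i) in
  is_lie br /\
  (exists x : g, x != 0) /\
  lie_generates br (fun x => exists i, x = e i \/ x = f i) /\
  (forall i j, br (h i) (h j) = 0) /\
  (forall i j, br (h i) (e j) = (cartanD i j)%:~R *: e j) /\
  (forall i j, br (h i) (f j) = - ((cartanD i j)%:~R *: f j)) /\
  (forall i j, i != j -> br (e i) (f j) = 0) /\
  (forall i j, i != j ->
     adpow br (absz (1 - cartanD i j)) (e i) (e j) = 0 /\
     adpow br (absz (1 - cartanD i j)) (f i) (f j) = 0).

(* E = [f_{n-1},[ ... ,[f_2, f_n] ...]]  (1-indexed), i.e. 0-indexed: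
   start from f_(n-1), then bracket on the left with f_1, ..., f_(n-2). *)
Definition Eelt (n : nat) (g : Type) (br : g -> g -> g) (f : 'I_n.+1 -> g) : g :=
  foldl (fun x k => br (f (inord k)) x) (f ord_max) (iota 1 (n.-1)).

Definition Felt (n : nat) (g : Type) (br : g -> g -> g) (e : 'I_n.+1 -> g) : g :=
  foldl (fun x k => br x (e (inord k))) (e ord_max) (iota 1 (n.-1)).

(* In D_n, E and F are root vectors for -b and b, where b = a_n + a_2 + ... + a_(n-1)
   in the labels of the statement.  The pairings of -b with the coroots of
   a_1, ..., a_(n-1) and with itself form the last row of M_n, so the relations (R1)
   are weight computations along the chain E = [f_(n-1), [..., [f_2, f_n]]], together
   with [E, F] = -(h_n + h_2 + ... + h_(n-1)), proved by induction along the chain.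
   The relations (R2) and (R3) come down to nilpotency statements such as
   (ad f_1)^2 E = 0 or (ad E)^2 e_(n-1) = 0, obtained from the Serre relations of D_n
   by the Leibniz rule for ad and, in characteristic 0, the identity
   ad (ad_x^2 y) = ad_x^2 ad_y - 2 ad_x ad_y ad_x + ad_y ad_x^2.
   Every statement about F is the corresponding statement about E in the opposite
   Lie algebra [x, y]' = [y, x], which exchanges the roles of the e_i and the f_i. *)

From HB Require Import structures.
From mathcomp Require Import all_boot all_order all_algebra.
From mathcomp Require Import zify complex Rstruct.
Import Order.TTheory GRing.Theory Num.Theory.
Set Implicit Arguments. Unset Strict Implicit. Unset Printing Implicit Defensive.
Local Open Scope ring_scope.

Lemma mulr2n_eq0 (V : lmodType C) (v : V) : v *+ 2 = 0 -> v = 0.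
Proof.
move=> /eqP; rewrite -scaler_nat scaler_eq0 => /orP[|/eqP //].
by rewrite (@pnatr_eq0 (complex Rdefinitions.R)).
Qed.

Section LieAlgebra.
Variables (L : lmodType C) (br : L -> L -> L).
Hypothesis HL : is_lie br.

Lemma brDl x y z : br (x + y) z = br x z + br y z.
Proof. by case: HL => H _ _ _; have := H 1 x y z; rewrite !scale1r. Qed.
Lemma brDr x y z : br z (x + y) = br z x + br z y.
Proof. by case: HL => _ H _ _; have := H 1 x y z; rewrite !scale1r. Qed.
Lemma br0l z : br 0 z = 0.
Proof. by apply: (addrI (br 0 z)); rewrite -brDl !addr0. Qed.
Lemma br0r z : br z 0 = 0.
Proof. by apply: (addrI (br z 0)); rewrite -brDr !addr0. Qed.
Lemma brZl a x z : br (a *: x) z = a *: br x z.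
Proof. by case: HL => H _ _ _; have := H a x 0 z; rewrite !addr0 br0l addr0. Qed.
Lemma brZr a x z : br z (a *: x) = a *: br z x.
Proof. by case: HL => _ H _ _; have := H a x 0 z; rewrite !addr0 br0r addr0. Qed.
Lemma brNl x z : br (- x) z = - br x z.
Proof. by rewrite -scaleN1r brZl scaleN1r. Qed.
Lemma brNr x z : br z (- x) = - br z x.
Proof. by rewrite -scaleN1r brZr scaleN1r. Qed.
Lemma brBr x y z : br z (x - y) = br z x - br z y.
Proof. by rewrite brDr brNr. Qed.

Lemma br_suml I (s : seq I) (x : I -> L) y :
  br (\sum_(i <- s) x i) y = \sum_(i <- s) br (x i) y.
Proof. by elim: s => [|i s IH]; rewrite ?big_nil ?br0l // !big_cons brDl IH. Qed.

Lemma br_antisym x y : br x y = - br y x.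
Proof.
case: HL => _ _ Hxx _; have := Hxx (x + y).
rewrite brDl !brDr !Hxx add0r addr0 => /eqP; rewrite addr_eq0 => /eqP //.
Qed.

Lemma br_leibniz x y z : br x (br y z) = br (br x y) z + br y (br x z).
Proof.
case: HL => _ _ _ J; have := J x y z.
rewrite [br z x]br_antisym brNr [br z (br x y)]br_antisym.
by move/eqP; rewrite -addrA -opprD addr_eq0 opprK addrC => /eqP.
Qed.

Lemma br_leibnizl x y z : br (br x y) z = br x (br y z) - br y (br x z).
Proof. by rewrite br_leibniz addrK. Qed.

Lemma br_commute x y z : br x y = 0 -> br x (br y z) = br y (br x z).
Proof. by move=> h; rewrite br_leibniz h br0l add0r. Qed.

Lemma br_sum_eigen (I : eqType) (s : seq I) (x : I -> L) (c : I -> C) y :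
  (forall i, i \in s -> br (x i) y = c i *: y) ->
  br (\sum_(i <- s) x i) y = (\sum_(i <- s) c i) *: y.
Proof. by move=> hc; rewrite br_suml scaler_suml; apply: eq_big_seq. Qed.

Lemma br_ad_sq x y z :
  br (br x (br x y)) z =
  br x (br x (br y z)) - br x (br y (br x z)) *+ 2 + br y (br x (br x z)).
Proof.
rewrite !br_leibnizl brBr [br x (br y (br x z)) *+ 2]mulr2n.
by rewrite opprB opprD !addrA addrAC.
Qed.

Lemma ad_sq_br_l x Y Z : br x Y = 0 -> br x (br x (br Z Y)) = br (br x (br x Z)) Y.
Proof.
by move=> hY; rewrite (br_leibniz x Z) hY br0r addr0 br_leibniz hY br0r addr0.
Qed.

Lemma ad_sq_br_r x Z Y : br x Z = 0 -> br x (br x (br Z Y)) = br Z (br x (br x Y)).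
Proof. by move=> hZ; rewrite (br_commute _ hZ) (br_commute _ hZ). Qed.

Lemma br_ad_ad_eq0 x X U :
  br x (br x X) = 0 -> br x (br x U) = 0 -> br X U = 0 ->
  br (br x X) (br x U) = 0.
Proof.
move=> hX hU hXU; rewrite br_leibnizl hU br0r subr0; apply: mulr2n_eq0.
have := br_ad_sq x X U; rewrite hX hXU hU !br0r br0l sub0r addr0.
by move/eqP; rewrite eq_sym oppr_eq0 => /eqP.
Qed.

Lemma ad_br_sq_eq0 x X a :
  br x a = 0 -> br x (br x X) = 0 -> br X (br X a) = 0 ->
  br (br x X) (br (br x X) a) = 0.
Proof.
move=> ha hX hXa.
have -> : br (br x X) a = br x (br X a) by rewrite br_leibnizl ha br0r subr0.
by apply: br_ad_ad_eq0 => //; rewrite ad_sq_br_l // hX br0l.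
Qed.

End LieAlgebra.

Definition lie_opp (L : Type) (br : L -> L -> L) : L -> L -> L := fun x y => br y x.

Section OppositeLieAlgebra.
Variables (L : lmodType C) (br : L -> L -> L).
Hypothesis HL : is_lie br.

Lemma is_lie_opp : is_lie (lie_opp br).
Proof.
have flip a b c : br (br a b) c = br c (br b a).
  by rewrite (br_antisym HL) (br_antisym HL a) (brNr HL) opprK.
case: HL => H1 H2 H3 H4; split=> [a x y z|a x y z|x|x y z]; rewrite /lie_opp.
- exact: H2.
- exact: H1.
- exact: H3.
- by rewrite !flip.
Qed.

Lemma adpow_opp k x y : adpow (lie_opp br) k x y = (-1) ^+ k *: adpow br k x y.
Proof.
elim: k => [|k IH]; first by rewrite scale1r.
rewrite /adpow iterS -/(adpow _ k x y) /lie_opp IH (brZl HL) (br_antisym HL _ x).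
by rewrite exprS mulN1r scaleNr scalerN.
Qed.

Lemma adpow_opp_eq0 k x y :
  (adpow (lie_opp br) k x y = 0) <-> (adpow br k x y = 0).
Proof.
rewrite adpow_opp; split=> [/eqP|->]; last by rewrite scaler0.
by rewrite scaler_eq0 signr_eq0 => /eqP.
Qed.

End OppositeLieAlgebra.

(* The Dynkin diagram of D_n and the matrices [cartanD] and [Mn] on natural-number
   indices, where [lia] can decide their entries. *)
Definition adjD (n i j : nat) : bool :=
  [|| [&& (i < n)%N, (j < n)%N & (i.+1 == j) || (j.+1 == i)],
      (i == 1%N) && (j == n) | (j == 1%N) && (i == n)].

Definition cartanD_nat (n i j : nat) : int :=
  if i == j then 2 else if adjD n i j then -1 else 0.

Definition Mn_nat (n i j : nat) : int :=
  if i == j then 2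
  else if ((i == 0%N) && (j == n)) || ((j == 0%N) && (i == n)) then 1
  else if (i.+1 == j) || (j.+1 == i) then -1
  else 0.

Lemma cartanD_natE n (i j : 'I_n.+1) : cartanD i j = cartanD_nat n i j.
Proof.
rewrite /cartanD /cartanD_nat /adjD /=.
by change (i == j) with (nat_of_ord i == nat_of_ord j); case: ifP => // _; case: ifP.
Qed.

Lemma MnE n (i j : 'I_n.+1) : Mn i j = Mn_nat n i j.
Proof. by rewrite /Mn /Mn_nat /=; change (i == j) with (nat_of_ord i == nat_of_ord j). Qed.

Lemma cartanD_nat_sym n i j : cartanD_nat n i j = cartanD_nat n j i.
Proof. by rewrite /cartanD_nat /adjD; repeat case: ifP; lia. Qed.

Lemma Mn_nat_sym n i j : Mn_nat n i j = Mn_nat n j i.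
Proof. by rewrite /Mn_nat; repeat case: ifP; lia. Qed.

Definition Dsupp (n m : nat) : seq nat := n :: iota 1 m.

Lemma mem_Dsupp n m l : (l \in Dsupp n m) = (l == n) || (1 <= l <= m)%N.
Proof. by rewrite inE mem_iota add1n. Qed.

Lemma Dsupp_S n m : Dsupp n m.+1 = rcons (Dsupp n m) m.+1.
Proof. by rewrite /Dsupp -(addn1 m) iotaD cats1 add1n addn1. Qed.

Lemma big_Dsupp_S (V : nmodType) n m (c : nat -> V) :
  \sum_(l <- Dsupp n m.+1) c l = \sum_(l <- Dsupp n m) c l + c m.+1.
Proof. by rewrite Dsupp_S big_rcons. Qed.

Definition chain_wt (n i m : nat) : int := \sum_(l <- Dsupp n m) cartanD_nat n i l.

Lemma chain_wtE n i m : (2 <= n)%N -> (1 <= m <= n.-1)%N -> (i <= n)%N ->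
  chain_wt n i m =
  if i == n then 1 else if i == 0%N then -1 else if (i < m)%N then 0
  else if i == m then 1 else if i == m.+1 then -1 else 0.
Proof.
move=> hn; elim: m => [//|[|m] IH] hm hi.
  by rewrite /chain_wt /= !big_cons big_nil /cartanD_nat /adjD; repeat case: ifP; lia.
by rewrite /chain_wt big_Dsupp_S -/(chain_wt _ _ _) IH // /cartanD_nat /adjD;
  repeat case: ifP; lia.
Qed.

Lemma chain_wt_pred n i : (2 <= n)%N -> (1 <= i <= n.-1)%N -> chain_wt n i i.-1 = -1.
Proof.
move=> hn; case: i => [//|[|i]] hi.
  by rewrite /chain_wt big_cons big_nil /cartanD_nat /adjD; repeat case: ifP; lia.
by rewrite chain_wtE //; repeat case: ifP; lia.
Qed.

Lemma sum_chain_wt n : (2 <= n)%N -> \sum_(k <- Dsupp n n.-1) chain_wt n k n.-1 = 2.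
Proof.
move=> hn.
suff H p : (p <= n.-1)%N ->
  \sum_(k <- Dsupp n p) chain_wt n k n.-1 = if p == n.-1 then 2 else 1.
  by rewrite H ?eqxx.
elim: p => [|p IH] hp.
  by rewrite big_cons big_nil chain_wtE //; repeat case: ifP; lia.
by rewrite big_Dsupp_S IH ?chain_wtE //; repeat case: ifP; lia.
Qed.

Lemma Mn_nat_cartan n i j : (i < n)%N -> (j < n)%N -> Mn_nat n i j = cartanD_nat n i j.
Proof. by rewrite /Mn_nat /cartanD_nat /adjD => *; repeat case: ifP; lia. Qed.

Lemma Mn_nat_last n i : (2 <= n)%N -> (i < n)%N -> Mn_nat n i n = - chain_wt n i n.-1.
Proof. by move=> hn hi; rewrite chain_wtE /Mn_nat; repeat case: ifP; lia. Qed.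

Lemma Mn_nat_lastE n i : (2 <= n)%N -> (i < n)%N ->
  Mn_nat n i n = if i == 0%N then 1 else if i == n.-1 then -1 else 0.
Proof. by move=> hn hi; rewrite /Mn_nat; repeat case: ifP; lia. Qed.

Lemma Mn_nat_gt0 n i j : i != j -> (0 < Mn_nat n i j)%R ->
  ((i == 0%N) && (j == n)) || ((i == n) && (j == 0%N)).
Proof. by rewrite /Mn_nat; repeat case: ifP; lia. Qed.

Definition chevalley_relsD n (L : lmodType C) (br : L -> L -> L)
  (e f : 'I_n.+1 -> L) : Prop :=
  [/\ is_lie br,
   (forall i j, br (br (e i) (f i)) (e j) = (cartanD i j)%:~R *: e j),
   (forall i j, br (br (e i) (f i)) (f j) = - ((cartanD i j)%:~R *: f j)),
   (forall i j, i != j -> br (e i) (f j) = 0) &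
   (forall i j, i != j ->
     adpow br (absz (1 - cartanD i j)) (e i) (e j) = 0 /\
     adpow br (absz (1 - cartanD i j)) (f i) (f j) = 0)].

Lemma chevalley_relsD_opp n (L : lmodType C) (br : L -> L -> L) (e f : 'I_n.+1 -> L) :
  chevalley_relsD br e f -> chevalley_relsD (lie_opp br) f e.
Proof.
case=> HL Hhe Hhf Hef Hser; split.
- exact: is_lie_opp HL.
- by move=> i j; rewrite /lie_opp (br_antisym HL) Hhf opprK.
- by move=> i j; rewrite /lie_opp (br_antisym HL) Hhe.
- by move=> i j hij; rewrite /lie_opp Hef // eq_sym.
- by move=> i j /Hser[he hf]; split; apply/adpow_opp_eq0.
Qed.

Section ChevalleyRelations.
Variables (n : nat) (L : lmodType C) (br : L -> L -> L) (e f : 'I_n.+1 -> L).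
Hypothesis HC : chevalley_relsD br e f.

Local Notation e_ k := (e (inord k)).
Local Notation f_ k := (f (inord k)).

Lemma chevD_lie : is_lie br.
Proof. by case: HC. Qed.

Lemma cartanD_inord i j : (i <= n)%N -> (j <= n)%N ->
  cartanD (inord i : 'I_n.+1) (inord j) = cartanD_nat n i j.
Proof. by move=> hi hj; rewrite cartanD_natE !inordK. Qed.

Lemma inord_neq i j : (i <= n)%N -> (j <= n)%N -> i != j ->
  (inord i : 'I_n.+1) != inord j.
Proof. by move=> hi hj; apply: contra => /eqP/(congr1 val); rewrite /= !inordK // => ->. Qed.

Lemma chevD_he i j : (i <= n)%N -> (j <= n)%N ->
  br (br (e_ i) (f_ i)) (e_ j) = (cartanD_nat n i j)%:~R *: e_ j.
Proof. by case: HC => _ H _ _ _ hi hj; rewrite H cartanD_inord. Qed.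

Lemma chevD_hf i j : (i <= n)%N -> (j <= n)%N ->
  br (br (e_ i) (f_ i)) (f_ j) = - ((cartanD_nat n i j)%:~R *: f_ j).
Proof. by case: HC => _ _ H _ _ hi hj; rewrite H cartanD_inord. Qed.

Lemma chevD_ef i j : (i <= n)%N -> (j <= n)%N -> i != j -> br (e_ i) (f_ j) = 0.
Proof. by case: HC => _ _ _ H _ hi hj hij; rewrite H // inord_neq. Qed.

Lemma chevD_serre i j : (i <= n)%N -> (j <= n)%N -> i != j ->
  adpow br (absz (1 - cartanD_nat n i j)) (e_ i) (e_ j) = 0 /\
  adpow br (absz (1 - cartanD_nat n i j)) (f_ i) (f_ j) = 0.
Proof. by case: HC => _ _ _ _ H hi hj hij; rewrite -cartanD_inord //; apply/H/inord_neq. Qed.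

Lemma chevD_f_comm i j : (i <= n)%N -> (j <= n)%N -> i != j -> ~~ adjD n i j ->
  br (f_ i) (f_ j) = 0.
Proof.
move=> hi hj hij hadj; have [_] := chevD_serre hi hj hij.
by rewrite /cartanD_nat (negbTE hij) (negbTE hadj).
Qed.

Lemma chevD_f_serre i j : (i <= n)%N -> (j <= n)%N -> i != j -> adjD n i j ->
  br (f_ i) (br (f_ i) (f_ j)) = 0.
Proof.
move=> hi hj hij hadj.
by have [_] := chevD_serre hi hj hij; rewrite /cartanD_nat (negbTE hij) hadj.
Qed.

End ChevalleyRelations.

Section FChain.
Variables (n : nat) (L : lmodType C) (br : L -> L -> L) (e f : 'I_n.+1 -> L).

Local Notation e_ k := (e (inord k)).
Local Notation f_ k := (f (inord k)).

Fixpoint fchain (m : nat) : L :=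
  if m is m'.+1 then br (f_ m) (fchain m') else f_ n.

Lemma Eelt_fchain : Eelt br f = fchain n.-1.
Proof.
suff H m : foldl (fun x k => br (f (inord k)) x) (f ord_max) (iota 1 m) = fchain m.
  exact: H.
elim: m => [|m IH]; first by rewrite /= -[ord_max]inord_val.
by rewrite -(addn1 m) iotaD foldl_cat IH add1n addn1.
Qed.

Hypothesis HC : chevalley_relsD br e f.
Let HL := chevD_lie HC.

Lemma fchain_ad_eq0 x m : (forall l, l \in Dsupp n m -> br x (f_ l) = 0) ->
  br x (fchain m) = 0.
Proof.
elim: m => [|m IH] hx /=; first by apply: hx; rewrite mem_head.
rewrite (br_leibniz HL) hx ?(br0l HL) ?IH ?(br0r HL) ?addr0 //.
  by move=> l hl; apply: hx; rewrite Dsupp_S mem_rcons inE hl orbT.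
by rewrite Dsupp_S mem_rcons mem_head.
Qed.

Lemma fchain_weight x (c : nat -> C) m :
  (forall l, l \in Dsupp n m -> br x (f_ l) = c l *: f_ l) ->
  br x (fchain m) = (\sum_(l <- Dsupp n m) c l) *: fchain m.
Proof.
elim: m => [|m IH] hx /=; first by rewrite big_cons big_nil addr0 hx ?mem_head.
rewrite (br_leibniz HL) hx ?(brZl HL) ?IH ?(brZr HL) ?big_Dsupp_S ?scalerDl 1?addrC //.
  by move=> l hl; apply: hx; rewrite Dsupp_S mem_rcons inE hl orbT.
by rewrite Dsupp_S mem_rcons mem_head.
Qed.

Hypothesis hn : (2 <= n)%N.

Local Notation h_ k := (br (e_ k) (f_ k)).

Lemma f_fchain_nonadj l m : (l <= n)%N -> (m <= n)%N ->
  (forall k, k \in Dsupp n m -> (k != l) && ~~ adjD n l k) ->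
  br (f_ l) (fchain m) = 0.
Proof.
move=> hl hm hk; apply: fchain_ad_eq0 => k /[dup] /hk /andP[hkl hadj].
rewrite mem_Dsupp => hkm; apply: (chevD_f_comm HC); rewrite 1?eq_sym //; lia.
Qed.

Lemma e_fchain_out i m : (i <= n)%N -> (m <= n)%N -> i \notin Dsupp n m ->
  br (e_ i) (fchain m) = 0.
Proof.
move=> hi hm hiD; apply: fchain_ad_eq0 => l hl.
apply: (chevD_ef HC) => //; first by move: hl; rewrite mem_Dsupp; lia.
by apply: contraNneq hiD => ->.
Qed.

Lemma h_fchain i m : (i <= n)%N -> (m <= n)%N ->
  br (h_ i) (fchain m) = - (chain_wt n i m)%:~R *: fchain m.
Proof.
move=> hi hm; rewrite (fchain_weight (c := fun l => - (cartanD_nat n i l)%:~R)).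
  by rewrite sumrN rmorph_sum.
by move=> l; rewrite mem_Dsupp => hl; rewrite (chevD_hf HC) ?scaleNr //; lia.
Qed.

Lemma e_fchain_top m : (1 <= m <= n.-1)%N -> br (e_ m) (fchain m) = fchain m.-1.
Proof.
case: m => [//|m] hm /=.
rewrite (br_leibniz HL) h_fchain ?chain_wt_pred ?(e_fchain_out (m := m)) //; try lia.
- by rewrite (br0r HL) addr0 opprK scale1r.
- by rewrite mem_Dsupp; lia.
Qed.

Lemma ad_f_sq_fchain m : (m.+1 <= n.-1)%N ->
  br (f_ m.+1) (br (f_ m.+1) (fchain m)) = 0.
Proof.
case: m => [|m] hm /=; first by apply: (chevD_f_serre HC); rewrite /adjD; lia.
rewrite (ad_sq_br_l HL) ?(chevD_f_serre HC) ?(br0l HL) //; try (rewrite /adjD; lia).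
by apply: f_fchain_nonadj => [||k]; rewrite ?mem_Dsupp /adjD; lia.
Qed.

Lemma f_fchain l m : (1 <= m <= n.-1)%N -> l \in Dsupp n m -> br (f_ l) (fchain m) = 0.
Proof.
elim: m l => [//|m IH] l hm; rewrite mem_Dsupp => hl.
have [->|hlm] := eqVneq l m.+1; first exact: ad_f_sq_fchain.
case: m IH hm hl hlm => [|m] IH hm hl hlm.
  have -> : l = n by lia.
  rewrite /= [br (f_ 1) _](br_antisym HL) (brNr HL) (chevD_f_serre HC) ?oppr0 //;
    rewrite /adjD; lia.
rewrite [fchain _]/= (br_leibniz HL) (IH l) ?(br0r HL) ?addr0 ?mem_Dsupp; try lia.
have [->|hlm1] := eqVneq l m.+1; last first.
  by rewrite (chevD_f_comm HC) ?(br0l HL) //; rewrite /adjD; lia.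
apply: (br_ad_ad_eq0 HL); first by apply: (chevD_f_serre HC); rewrite /adjD; lia.
- by apply: ad_f_sq_fchain; lia.
- by apply: f_fchain_nonadj => [||k]; rewrite ?mem_Dsupp /adjD; lia.
Qed.

Lemma fchain_fchain m k : (1 <= m <= n.-1)%N -> (k <= m)%N ->
  br (fchain m) (fchain k) = 0.
Proof.
move=> hm; elim: k => [|k IH] hk.
  by rewrite (br_antisym HL) f_fchain ?oppr0 ?mem_head.
have fk : br (fchain m) (f_ k.+1) = 0.
  by rewrite (br_antisym HL) f_fchain ?oppr0 // mem_Dsupp; lia.
rewrite [fchain k.+1]/= (br_leibniz HL) fk IH; last by lia.
by rewrite (br0l HL) (br0r HL) addr0.
Qed.

Lemma e_fchain_lt i m : (i < m <= n.-1)%N -> br (e_ i) (fchain m) = 0.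
Proof.
case: i => [|i] him.
  by apply: e_fchain_out; rewrite ?mem_Dsupp; lia.
elim: m him => [//|m IH] him; rewrite [fchain _]/= (br_leibniz HL).
rewrite (chevD_ef HC) ?(br0l HL) ?add0r; try lia.
have [<-|him'] := eqVneq m i.+1; last by rewrite IH ?(br0r HL) //; lia.
rewrite e_fchain_top /=; last by lia.
by apply: f_fchain_nonadj => [||k]; rewrite ?mem_Dsupp /adjD; lia.
Qed.

Lemma ad_e_sq_fchain m : (1 <= m <= n.-1)%N -> br (e_ m) (br (e_ m) (fchain m)) = 0.
Proof.
move=> hm; rewrite e_fchain_top //; apply: e_fchain_out; rewrite ?mem_Dsupp; lia.
Qed.

Lemma ad_fchain_sq_e m : (1 <= m <= n.-1)%N ->
  br (fchain m) (br (fchain m) (e_ m)) = 0.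
Proof.
move=> hm; rewrite [br _ (e_ m)](br_antisym HL) e_fchain_top // (brNr HL).
by rewrite fchain_fchain ?oppr0 //; lia.
Qed.

Lemma ad_f0_sq_fchain m : (1 <= m <= n.-1)%N ->
  br (f_ 0) (br (f_ 0) (fchain m)) = 0.
Proof.
elim: m => [//|[|m] IH] hm /=.
  rewrite (ad_sq_br_l HL) ?(chevD_f_serre HC) ?(br0l HL) ?(chevD_f_comm HC) //;
    rewrite /adjD; lia.
by rewrite (ad_sq_br_r HL) ?IH ?(br0r HL) ?(chevD_f_comm HC) //; rewrite /adjD; lia.
Qed.

Lemma ad_fchain_sq_f0 m : (1 <= m <= n.-1)%N ->
  br (fchain m) (br (fchain m) (f_ 0)) = 0.
Proof.
elim: m => [//|[|m] IH] hm.
  (* [f_1, f_n] = -[f_n, f_1], and f_n commutes with f_0 *)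
  rewrite /= (br_antisym HL (f_ 1)) !(brNl HL) (brNr HL) opprK.
  by apply: (ad_br_sq_eq0 HL); apply: (chevD_f_serre HC) || apply: (chevD_f_comm HC);
    rewrite /adjD; lia.
apply: (ad_br_sq_eq0 HL); first by apply: (chevD_f_comm HC); rewrite /adjD; lia.
- by apply: ad_f_sq_fchain; lia.
- by apply: IH; lia.
Qed.

End FChain.

Section ChainBracket.
Variables (n : nat) (L : lmodType C) (br : L -> L -> L) (e f : 'I_n.+1 -> L).
Hypothesis hn : (2 <= n)%N.
Hypothesis HC : chevalley_relsD br e f.
Let HL := chevD_lie HC.
Let HCo := chevalley_relsD_opp HC.

Local Notation e_ k := (e (inord k)).
Local Notation f_ k := (f (inord k)).
Local Notation h_ k := (br (e_ k) (f_ k)).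

Lemma br_hsum_e j m : (j <= n)%N -> (m <= n)%N ->
  br (\sum_(k <- Dsupp n m) h_ k) (e_ j) = (chain_wt n j m)%:~R *: e_ j.
Proof.
move=> hj hm; rewrite (br_sum_eigen HL (c := fun k => (cartanD_nat n k j)%:~R)).
  by rewrite -rmorph_sum /chain_wt; under eq_bigr do rewrite cartanD_nat_sym.
by move=> k; rewrite mem_Dsupp => hk; rewrite (chevD_he HC) //; lia.
Qed.

Lemma br_hsum_f j m : (j <= n)%N -> (m <= n)%N ->
  br (\sum_(k <- Dsupp n m) h_ k) (f_ j) = - (chain_wt n j m)%:~R *: f_ j.
Proof.
move=> hj hm; rewrite (br_sum_eigen HL (c := fun k => - (cartanD_nat n k j)%:~R)).
  by rewrite sumrN -rmorph_sum /chain_wt; under eq_bigr do rewrite cartanD_nat_sym.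
by move=> k; rewrite mem_Dsupp => hk; rewrite (chevD_hf HC) ?scaleNr //; lia.
Qed.

Lemma fchain_br_fchain_opp m : (m <= n.-1)%N ->
  br (fchain br f m) (fchain (lie_opp br) e m) = - \sum_(k <- Dsupp n m) h_ k.
Proof.
elim: m => [|m IH] hm; first by rewrite big_cons big_nil addr0 (br_antisym HL).
set x := f_ m.+1; set y := e_ m.+1.
set X := fchain br f m; set Y := fchain (lie_opp br) e m.
change (br (br x X) (br Y y) = - \sum_(k <- Dsupp n m.+1) h_ k).
have xY : br x Y = 0.
  rewrite (br_antisym HL); apply/eqP; rewrite oppr_eq0; apply/eqP.
  by apply: (e_fchain_out HCo); rewrite ?mem_Dsupp; lia.
have xXY : br (br x X) Y = x.
  rewrite (br_leibnizl HL) xY (br0r HL) subr0 IH 1?(brNr HL) -?(br_antisym HL); last by lia.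
  by rewrite br_hsum_f ?(chain_wt_pred (i := m.+1)) ?opprK ?scale1r //; lia.
have xXy : br (br x X) y = - X.
  by rewrite (br_antisym HL) -[br x X]/(fchain br f m.+1) (e_fchain_top HC) //; lia.
rewrite (br_leibniz HL) xXY xXy (brNr HL) -(br_antisym HL) IH; last by lia.
by rewrite big_Dsupp_S [br x y](br_antisym HL) opprD addrC.
Qed.

End ChainBracket.

(* The intended images of the generators of gim(M_n).  [gim_f] is [gim_e] computed in the
   opposite Lie algebra with e and f exchanged, so that node n goes to E under [gim_e]
   and to F under [gim_f]. *)
Definition gim_e n (L : lmodType C) (br : L -> L -> L) (e f : 'I_n.+1 -> L) (k : nat) : L :=
  if k == n then fchain br f n.-1 else e (inord k).

Definition gim_f n (L : lmodType C) (br : L -> L -> L) (e f : 'I_n.+1 -> L) : nat -> L :=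
  gim_e (lie_opp br) f e.

Section GimRelations.
Variables (n : nat) (L : lmodType C) (br : L -> L -> L) (e f : 'I_n.+1 -> L).
Hypothesis hn : (2 <= n)%N.
Hypothesis HC : chevalley_relsD br e f.
Let HL := chevD_lie HC.
Let HCo := chevalley_relsD_opp HC.

Local Notation e' := (gim_e br e f).
Local Notation f' := (gim_f br e f).

Lemma gim_he i j : (i <= n)%N -> (j <= n)%N ->
  br (br (e' i) (f' i)) (e' j) = (Mn_nat n i j)%:~R *: e' j.
Proof.
move=> hi hj; rewrite /gim_f /gim_e.
case: (eqVneq i n) => [->|hin]; case: (eqVneq j n) => [->|hjn];
  rewrite ?(fchain_br_fchain_opp hn HC) ?(brNl HL) //.
- rewrite (br_sum_eigen HL (c := fun k => - (chain_wt n k n.-1)%:~R)).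
    by rewrite sumrN -rmorph_sum sum_chain_wt // scaleNr opprK /Mn_nat eqxx.
  by move=> k; rewrite mem_Dsupp => hk; rewrite (h_fchain HC) //; lia.
- by rewrite (br_hsum_e hn HC) ?leq_pred // Mn_nat_sym Mn_nat_last ?intrN ?scaleNr //; lia.
- by rewrite (h_fchain HC) ?leq_pred // Mn_nat_last ?intrN //; lia.
- by rewrite (chevD_he HC) // Mn_nat_cartan //; lia.
Qed.

Lemma gim_ef i j : (i <= n)%N -> (j <= n)%N -> i != j -> (Mn_nat n i j <= 0)%R ->
  br (e' i) (f' j) = 0.
Proof.
move=> hi hj hij hM; rewrite /gim_f /gim_e.
case: (eqVneq i n) => [Ei|hin]; case: (eqVneq j n) => [Ej|hjn].
- by rewrite Ei Ej eqxx in hij.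
- rewrite Ei Mn_nat_sym Mn_nat_lastE in hM; try lia.
  rewrite (br_antisym HL) (f_fchain HC) ?oppr0 // ?mem_Dsupp;
    move: hM; repeat case: ifP; lia.
- rewrite Ej Mn_nat_lastE in hM; try lia.
  rewrite (br_antisym HL); apply/eqP; rewrite oppr_eq0; apply/eqP.
  by apply: (f_fchain HCo); rewrite ?mem_Dsupp; move: hM; repeat case: ifP; lia.
- exact: (chevD_ef HC).
Qed.

Lemma gim_serre i j : (i <= n)%N -> (j <= n)%N -> i != j -> (Mn_nat n i j <= 0)%R ->
  adpow br (absz (1 - Mn_nat n i j)) (e' i) (e' j) = 0.
Proof.
move=> hi hj hij hM; rewrite /gim_e.
case: (eqVneq i n) => [Ei|hin]; case: (eqVneq j n) => [Ej|hjn].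
- by rewrite Ei Ej eqxx in hij.
- rewrite Ei Mn_nat_sym Mn_nat_lastE in hM *; try lia.
  case: ifP hM => [//|j0 _]; case: ifP => [/eqP->|jl].
    by apply: (ad_fchain_sq_e HC); lia.
  by rewrite /= (br_antisym HL) (e_fchain_lt HC) ?oppr0 //; move: j0 jl; lia.
- rewrite Ej Mn_nat_lastE in hM *; try lia.
  case: ifP hM => [//|i0 _]; case: ifP => [/eqP->|il].
    by apply: (ad_e_sq_fchain HC); lia.
  by rewrite /= (e_fchain_lt HC) //; move: i0 il; lia.
- rewrite Mn_nat_cartan; try lia.
  by have [] := chevD_serre HC hi hj hij.
Qed.

Lemma gim_ee i j : (i <= n)%N -> (j <= n)%N -> i != j -> (0 < Mn_nat n i j)%R ->
  br (e' i) (e' j) = 0.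
Proof.
move=> hi hj /Mn_nat_gt0 /[apply]; have n0 : (0 == n) = false by lia.
case/orP=> /andP[/eqP-> /eqP->]; rewrite /gim_e eqxx n0.
- by rewrite (e_fchain_lt HC) //; lia.
- by rewrite (br_antisym HL) (e_fchain_lt HC) ?oppr0 //; lia.
Qed.

Lemma gim_ad_ef i j : (i <= n)%N -> (j <= n)%N -> i != j -> (0 < Mn_nat n i j)%R ->
  adpow br (absz (Mn_nat n i j + 1)) (e' i) (f' j) = 0.
Proof.
move=> hi hj /Mn_nat_gt0 /[apply]; have n0 : (0 == n) = false by lia.
case/orP=> /andP[/eqP-> /eqP->]; rewrite /gim_f /gim_e eqxx n0.
- rewrite Mn_nat_lastE //; last by lia.
  change (adpow br 2 (e (inord 0)) (fchain (lie_opp br) e n.-1) = 0).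
  apply/(adpow_opp_eq0 HL).
  by apply: (ad_f0_sq_fchain HCo); lia.
- rewrite Mn_nat_sym Mn_nat_lastE //=; last by lia.
  by apply: (ad_fchain_sq_f0 HC); lia.
Qed.

End GimRelations.

Lemma gim_e_lt n (L : lmodType C) (br : L -> L -> L) (e f : 'I_n.+1 -> L) (i : 'I_n.+1) :
  i != ord_max -> gim_e br e f i = e i.
Proof.
move=> hi; rewrite /gim_e ifF ?inord_val //.
by apply: contraNF hi => /eqP hin; apply/eqP/val_inj.
Qed.

Lemma gim_e_max n (L : lmodType C) (br : L -> L -> L) (e f : 'I_n.+1 -> L) :
  gim_e br e f (ord_max : 'I_n.+1) = Eelt br f.
Proof. by rewrite /gim_e eqxx Eelt_fchain. Qed.

Lemma gim_rels_chevalleyD n (L : lmodType C) (br : L -> L -> L) (e f : 'I_n.+1 -> L) :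
  (2 <= n)%N -> chevalley_relsD br e f ->
  gim_rels br (fun i : 'I_n.+1 => gim_e br e f i) (fun i => gim_f br e f i)
    (fun i => br (gim_e br e f i) (gim_f br e f i)).
Proof.
move=> hn HC; have HL := chevD_lie HC; have HCo := chevalley_relsD_opp HC.
have hle (i : 'I_n.+1) : (i <= n)%N := leq_ord i.
split; [|split; [|split; [|split]]] => [i j|i j|//|i j hij|i j hij]; rewrite MnE.
- exact: gim_he.
- by rewrite [LHS](br_antisym HL); congr (- _); apply: (gim_he hn HCo).
- move=> hM; split; [exact: gim_ef | | exact: gim_serre |].
    by rewrite (br_antisym HL) (gim_ef hn HC) ?oppr0 // 1?eq_sym // Mn_nat_sym.
  by apply/(adpow_opp_eq0 HL); apply: (gim_serre hn HCo).
- move=> hM; split; [exact: gim_ee | | exact: gim_ad_ef |].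
    by apply: (gim_ee hn HCo); rewrite // 1?eq_sym // Mn_nat_sym.
  by apply/(adpow_opp_eq0 HL); apply: (gim_ad_ef hn HCo).
Qed.

Theorem lemma2p4 (n : nat) (hn : (2 <= n)%N)
  (G : lmodType C) (brG : G -> G -> G) (eG fG hG : 'I_n.+1 -> G)
  (g : lmodType C) (br : g -> g -> g) (e f : 'I_n.+1 -> g) :
  is_gim brG eG fG hG ->
  chevalley_Dn br e f ->
  exists phi : G -> g,
    [/\ lie_hom brG br phi,
        (forall i : 'I_n.+1, i != ord_max -> phi (eG i) = e i),
        (forall i : 'I_n.+1, i != ord_max -> phi (fG i) = f i),
        phi (eG ord_max) = Eelt br f &
        phi (fG ord_max) = Felt br e].
Proof.
move=> [_ [_ gim_univ]] [HL [_ [_ [_ [Hhe [Hhf [Hef Hser]]]]]]].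
have HC : chevalley_relsD br e f by split.
have [phi [hom phi_e phi_f _ _]] := gim_univ g br _ _ _ HL (gim_rels_chevalleyD hn HC).
exists phi; split=> // [i hi|i hi||]; rewrite ?phi_e ?phi_f.
- exact: gim_e_lt.
- exact: (gim_e_lt (lie_opp br)).
- exact: gim_e_max.
- exact: (gim_e_max (lie_opp br)).
Qed.
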